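(* For every countably infinite algebraically closed group $K$, the isomorphism class $\{G\in\mathcal G:\ \overline G\cong K\}$ is dense in $\mathcal G$.
   Context: Let $\mathbb N=\{1,2,3,\dots\}$. Equip $\mathbb N^{\mathbb N\times\mathbb N}$ with the product topology of the discrete topology on $\mathbb N$. Let $\mathcal G$ be the subspace consisting of those $A\in\mathbb N^{\mathbb N\times\mathbb N}$ that are the multiplication table of a group on the underlying set $\mathbb N$ whose identity element is $1$. For $G\in\mathcal G$, $\overline G$ denotes the group on $\mathbb N$ with multiplication table $G$. A group $K$ is algebraically closed if every finite system of equations and inequations (words in variables $x_1,x_2,\dots$ with constants from $K$, i.e. elements of the free product of the free group on the variables with $K$) that has a solution in some group containing $K$ already has a solution in $K$. *)

From Stdlib Require List.
From mathcomp Require Import all_boot.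
Set Implicit Arguments.
Unset Strict Implicit.
Unset Printing Implicit Defensive.

Record group_axioms (T : Type) (mul : T -> T -> T) (inv : T -> T) (one : T)
  : Prop := GroupAxioms {
  mulA : forall x y z, mul x (mul y z) = mul (mul x y) z;
  mul1g : forall x, mul one x = x;
  mulg1 : forall x, mul x one = x;
  mulVg : forall x, mul (inv x) x = one;
  mulgV : forall x, mul x (inv x) = one }.

(* Words in variables x_0, x_1, ... with constants from K: syntactic
   representatives of elements of the free product F(x_0, x_1, ...) * K. *)
Inductive word (K : Type) : Type :=
  | WVar of nat
  | WCst of K
  | WOne
  | WMul of word K & word K
  | WInv of word K.

Fixpoint weval (K L : Type) (mulL : L -> L -> L) (invL : L -> L) (oneL : L)
    (f : K -> L) (a : nat -> L) (w : word K) : L :=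
  match w with
  | WVar i => a i
  | WCst k => f k
  | WOne => oneL
  | WMul u v => mulL (weval mulL invL oneL f a u) (weval mulL invL oneL f a v)
  | WInv u => invL (weval mulL invL oneL f a u)
  end.

Definition solves (K L : Type) (mulL : L -> L -> L) (invL : L -> L) (oneL : L)
    (f : K -> L) (a : nat -> L) (eqs neqs : list (word K)) : Prop :=
  (forall w, List.In w eqs -> weval mulL invL oneL f a w = oneL) /\
  (forall w, List.In w neqs -> weval mulL invL oneL f a w <> oneL).

Definition algebraically_closed (K : Type) (mul : K -> K -> K) (inv : K -> K)
    (one : K) : Prop :=
  forall eqs neqs : list (word K),
    (exists (L : Type) (mulL : L -> L -> L) (invL : L -> L) (oneL : L)
            (f : K -> L),
        group_axioms mulL invL oneL /\ injective f /\
        (forall x y, f (mul x y) = mulL (f x) (f y)) /\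
        exists a : nat -> L, solves mulL invL oneL f a eqs neqs) ->
    exists a : nat -> K, solves mul inv one id a eqs neqs.

Definition countably_infinite (K : Type) : Prop :=
  exists e : nat -> K, bijective e.

Definition posnat := {n : nat | 0 < n}.
Definition pone : posnat := exist _ 1 isT.

Definition table := posnat -> posnat -> posnat.

Definition in_calG (A : table) : Prop :=
  exists inv : posnat -> posnat, group_axioms A inv pone.

Definition table_iso (A : table) (K : Type) (mul : K -> K -> K) : Prop :=
  exists phi : posnat -> K, bijective phi /\
    forall x y, phi (A x y) = mul (phi x) (phi y).

(* S is dense in the subspace G of N^(N x N) with the product of discrete
   topologies: every nonempty basic open set of G (i.e. the set of tables in
   G agreeing with some A0 in G on a finite set of positions) meets S. *)
Definition dense_in_calG (S : table -> Prop) : Prop :=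
  forall A0 : table, in_calG A0 ->
  forall pos : list (posnat * posnat),
  exists A : table, in_calG A /\ S A /\
    forall p, List.In p pos -> A p.1 p.2 = A0 p.1 p.2.

From Pilot Require Import Defs.
From mathcomp Require Import all_boot.

(* An algebraically closed group K contains a copy of every finite piece of
   the multiplication table of any group H: in K x H the elements (1, h),
   h in the piece, satisfy the equations x_h x_h' = x_(hh') of the piece and
   are pairwise distinct, so this system already has a solution in K.
   Given A0 in calG and finitely many positions, embed into K the piece of
   the group with table A0 made of 1 and the entries at those positions,
   extend the embedding to a bijection N -> K (K is countably infinite), and
   pull back the multiplication of K along it: the resulting table is
   isomorphic to K and agrees with A0 at the given positions. *)

Set Implicit Arguments.
Unset Strict Implicit.
Unset Printing Implicit Defensive.

Lemma InP (T : eqType) (x : T) (s : seq T) : reflect (List.In x s) (x \in s).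
Proof.
elim: s => [|y s IHs] /=; first by right.
rewrite inE; apply: (iffP orP) => [[/eqP->|/IHs]|[->|/IHs]]; by [left|right|left|right].
Qed.

Section GroupFacts.

Variables (T : Type) (mul : T -> T -> T) (inv : T -> T) (one : T).
Hypothesis gT : group_axioms mul inv one.

Lemma mul_inv_eq1 x y : mul x (inv y) = one -> x = y.
Proof.
by move=> xy1; rewrite -[x](Defs.mulg1 gT) -(Defs.mulVg gT y) (Defs.mulA gT) xy1 (Defs.mul1g gT).
Qed.

Lemma idem_eq1 x : mul x x = x -> x = one.
Proof.
by move=> xx; rewrite -(Defs.mulgV gT x) -{2}xx -(Defs.mulA gT) (Defs.mulgV gT) (Defs.mulg1 gT).
Qed.

Lemma group_axioms_prod (U : Type) (mulU : U -> U -> U) invU oneU :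
  group_axioms mulU invU oneU ->
  group_axioms (fun u v : T * U => (mul u.1 v.1, mulU u.2 v.2))
               (fun u => (inv u.1, invU u.2)) (one, oneU).
Proof.
move=> gU; constructor=> [[? ?] [? ?] [? ?]|[? ?]|[? ?]|[? ?]|[? ?]] /=.
- by rewrite (Defs.mulA gT) (Defs.mulA gU).
- by rewrite (Defs.mul1g gT) (Defs.mul1g gU).
- by rewrite (Defs.mulg1 gT) (Defs.mulg1 gU).
- by rewrite (Defs.mulVg gT) (Defs.mulVg gU).
- by rewrite (Defs.mulgV gT) (Defs.mulgV gU).
Qed.

Lemma group_axioms_transport (U : Type) (phi : U -> T) (phinv : T -> U) u1 :
  cancel phi phinv -> cancel phinv phi -> phi u1 = one ->
  group_axioms (fun x y => phinv (mul (phi x) (phi y)))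
               (fun x => phinv (inv (phi x))) u1.
Proof.
move=> phiK phinvK phi1; constructor=> *; rewrite ?phinvK.
- by rewrite (Defs.mulA gT).
- by rewrite phi1 (Defs.mul1g gT) phiK.
- by rewrite phi1 (Defs.mulg1 gT) phiK.
- by rewrite (Defs.mulVg gT) -phi1 phiK.
- by rewrite (Defs.mulgV gT) -phi1 phiK.
Qed.

End GroupFacts.

Section Transposition.

Variable T : eqType.

Definition transp (u v x : T) : T := if x == u then v else if x == v then u else x.

Lemma transpK u v : involutive (transp u v).
Proof.
move=> x; rewrite /transp.
have [->|xu] := eqVneq x u; first by rewrite eqxx; case: eqVneq => [->|]; rewrite ?eqxx.
have [xv|xv] := eqVneq x v; first by rewrite xv !eqxx.
by rewrite (negbTE xu) (negbTE xv).
Qed.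

Lemma transp_bij u v : bijective (transp u v).
Proof. by exists (transp u v); apply: transpK. Qed.

Lemma bijective_extend (c : T -> T) (s : seq T) :
  {in s &, injective c} -> exists sigma, bijective sigma /\ {in s, sigma =1 c}.
Proof.
elim: s => [|i s IHs] cinj; first by exists id; split=> //; exists id.
have [sigma [bij_sigma sigma_c]] : exists sigma, bijective sigma /\ {in s, sigma =1 c}.
  by apply: IHs; apply: sub_in2 cinj => x xs; rewrite inE xs orbT.
have [i_s|nis] := boolP (i \in s).
  by exists sigma; split=> // j; rewrite inE => /predU1P [->|]; apply: sigma_c.
exists (transp (sigma i) (c i) \o sigma); split; first exact: bij_comp (transp_bij _ _) bij_sigma.
move=> j; rewrite inE => /predU1P [->|js] /=; first by rewrite /transp eqxx.
have ji : j != i by apply: contraNneq nis => <-.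
have cj_sigmai : c j != sigma i.
  by rewrite -sigma_c //; apply: contra ji => /eqP /(bij_inj bij_sigma)->.
have cj_ci : c j != c i.
  by apply: contra ji => /eqP /cinj ->; rewrite ?inE ?js ?eqxx ?orbT.
by rewrite (sigma_c j js) /transp (negbTE cj_sigmai) (negbTE cj_ci).
Qed.

End Transposition.

Lemma bijective_extend_along (U : eqType) (V : Type) (psi b : U -> V) (s : seq U) :
  bijective psi -> {in s &, injective b} ->
  exists phi, bijective phi /\ {in s, phi =1 b}.
Proof.
move=> [psinv psiK psinvK] b_inj.
have [sigma [bij_sigma sigma_b]] : exists sigma, bijective sigma /\ {in s, sigma =1 psinv \o b}.
  by apply: bijective_extend => x y xs ys /(can_inj psinvK); apply: b_inj.
exists (psi \o sigma); split; first by apply: bij_comp => //; exists psinv.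
by move=> x xs /=; rewrite sigma_b //= psinvK.
Qed.

Lemma posnat_bijection (K : Type) :
  countably_infinite K -> exists psi : posnat -> K, bijective psi.
Proof.
move=> [e [g eK gK]]; exists (fun p => e (val p).-1).
exists (fun k => insubd pone (g k).+1) => [p|k] /=.
- by apply: val_inj; rewrite eK val_insubd /= prednK ?(valP p).
- by rewrite val_insubd /= gK.
Qed.

Section FinitePiece.

Variables (K : Type) (mul : K -> K -> K) (inv : K -> K) (one : K).
Hypotheses (gK : group_axioms mul inv one) (acK : algebraically_closed mul inv one).
Variables (T : eqType) (mulT : T -> T -> T) (invT : T -> T) (oneT : T).
Hypothesis gT : group_axioms mulT invT oneT.
Variable s : seq T.

Local Notation var x := (WVar K (index x s)).

Definition piece_eqs : list (word K) :=
  List.flat_map (fun x => List.map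
      (fun y => WMul (WMul (var x) (var y)) (WInv (var (mulT x y))))
      (List.filter (fun y => mulT x y \in s) s)) s.

Definition piece_neqs : list (word K) :=
  List.flat_map (fun x => List.map (fun y => WMul (var x) (WInv (var y)))
      (List.filter (fun y => y != x) s)) s.

Lemma piece_solvable : exists a : nat -> K, solves mul inv one id a piece_eqs piece_neqs.
Proof.
apply: acK; exists (K * T)%type, (fun u v => (mul u.1 v.1, mulT u.2 v.2)),
  (fun u => (inv u.1, invT u.2)), (one, oneT), (fun k => (k, oneT)).
split; first exact: group_axioms_prod.
split; first by move=> ? ? [].
split; first by move=> x y; rewrite (Defs.mul1g gT).
exists (fun n => (one, nth oneT s n)).
have var_val x : x \in s -> nth oneT s (index x s) = x by apply: nth_index.
split=> w.
- case/List.in_flat_map => x [/InP xs /List.in_map_iff [y [<- /List.filter_In [/InP ys xys]]]] /=.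
  by rewrite !var_val // (Defs.mul1g gK) (Defs.mulgV gK) (Defs.mulgV gT).
- case/List.in_flat_map => x [/InP xs /List.in_map_iff [y [<- /List.filter_In [/InP ys yx]]]] /=.
  by rewrite !var_val // => -[_ /(mul_inv_eq1 gT) xy]; move: yx; rewrite xy eqxx.
Qed.

Lemma piece_embeds : exists b : T -> K, {in s &, injective b} /\
  {in s &, forall x y, mulT x y \in s -> b (mulT x y) = mul (b x) (b y)}.
Proof.
have [a [a_eqs a_neqs]] := piece_solvable.
exists (fun x => a (index x s)); split.
- move=> x y xs ys axy; apply/eqP; apply: contraT => xy.
  have /a_neqs /= : List.In (WMul (var y) (WInv (var x))) piece_neqs.
    apply/List.in_flat_map; exists y; split; first exact/InP.
    by apply/List.in_map_iff; exists x; split; last by apply/List.filter_In; split; [apply/InP|].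
  by rewrite axy (Defs.mulgV gK).
- move=> x y xs ys xys; symmetry; apply: (mul_inv_eq1 gK).
  apply: (a_eqs (WMul (WMul (var x) (var y)) (WInv (var (mulT x y))))).
  apply/List.in_flat_map; exists x; split; first exact/InP.
  by apply/List.in_map_iff; exists y; split; last by apply/List.filter_In; split; [apply/InP|].
Qed.

End FinitePiece.

Theorem theorem6p5 (K : Type) (mul : K -> K -> K) (inv : K -> K) (one : K) :
  group_axioms mul inv one ->
  countably_infinite K ->
  algebraically_closed mul inv one ->
  dense_in_calG (fun G : table => in_calG G /\ table_iso G mul).
Proof.
move=> gK /posnat_bijection [psi bij_psi] acK A0 [invA gA] pos.
pose s := pone :: flatten [seq [:: p.1; p.2; A0 p.1 p.2] | p <- pos].
have pos_s p : List.In p pos -> [/\ p.1 \in s, p.2 \in s & A0 p.1 p.2 \in s].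
  move/InP=> p_pos.
  have sub : {subset [:: p.1; p.2; A0 p.1 p.2] <= s}.
    move=> x xp; rewrite inE; apply/orP; right.
    by apply/flattenP; exists [:: p.1; p.2; A0 p.1 p.2] => //; apply: map_f.
  by split; apply: sub; rewrite !inE eqxx ?orbT.
have [b [b_inj b_mul]] := piece_embeds gK acK gA s.
have [phi [bij_phi phi_b]] := bijective_extend_along bij_psi b_inj.
have phi1 : phi pone = one.
  have s1 : pone \in s by rewrite inE eqxx.
  by apply: (idem_eq1 gK); rewrite phi_b // -b_mul // (Defs.mul1g gA).
have [phinv phiK phinvK] := bij_phi.
pose G x y := phinv (mul (phi x) (phi y)).
have G_calG : in_calG G.
  by exists (fun x => phinv (inv (phi x))); apply: (group_axioms_transport gK phiK phinvK phi1).
exists G; split=> //; split.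
  by split=> //; exists phi; split=> // x y; rewrite phinvK.
move=> p /pos_s [p1s p2s p12s].
by rewrite /G !phi_b // -b_mul // -phi_b // phiK.
Qed.
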